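(* Let $\hat{\mathbf A}\in\mathbb R^{p\times r}$ and an orthogonal $\hat{\mathbf P}\in\mathbb R^{r\times r}$ be random with $(\hat{\mathbf A},\hat{\mathbf P})$ independent of $\{\omega_{ij}:i\in\mathcal N_2,j\in[p]\}$, and set $\mathbf A^*=\mathbf V_r^*\hat{\mathbf P}$, $\boldsymbol\Theta^*=\mathbf U_r^*\mathbf D_r^*\hat{\mathbf P}$. If $\|\mathbf U_r^*\mathbf D_r^*\|_{2\to\infty}\le C_1$ and $\|\hat{\mathbf A}\|_{2\to\infty},\|\mathbf V_r^*\|_{2\to\infty}\le C_2$, then with probability at least $1-1/n$, $$\max_{i\in\mathcal N_2}\beta_{1,i}(\hat{\mathbf A})\le C_1^2C_2\Big\{\pi_{\max}\|\hat{\mathbf A}-\mathbf A^*\|_F^2+4\pi_{\max}^{1/2}C_2(\log n)^{1/2}\|\hat{\mathbf A}-\mathbf A^*\|_F+4C_2^2\log n\Big\}.$$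
   Context: $\mathbf M^*\in\mathbb R^{n\times p}$ is deterministic of rank $r$ with compact SVD $\mathbf U_r^*\mathbf D_r^*(\mathbf V_r^* )^T$ ($\mathbf U_r^*,\mathbf V_r^*$ with orthonormal columns). The $\omega_{ij}\in\{0,1\}$ are independent Bernoulli$(\pi_{ij})$, $\pi_{\max}=\max\pi_{ij}$. $\mathcal N_2\subset[n]$ is fixed. With rows $\hat{\mathbf a}_j^T,\mathbf a_j^{*T},\boldsymbol\theta_i^{*T}$ of $\hat{\mathbf A},\mathbf A^*,\boldsymbol\Theta^*$: $\beta_{1,i}(\hat{\mathbf A})=\sup_{\|\mathbf u\|=1}\sum_{j=1}^p\omega_{ij}((\hat{\mathbf a}_j-\mathbf a_j^* )^T\boldsymbol\theta_i^* )^2|\hat{\mathbf a}_j^T\mathbf u|$. $\|\cdot\|_F$ Frobenius norm, $\|X\|_{2\to\infty}$ maximal row Euclidean norm. *)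

From HB Require Import structures.
From mathcomp Require Import all_boot all_order all_algebra.
From mathcomp Require Import all_classical all_reals all_analysis.
Set Implicit Arguments. Unset Strict Implicit. Unset Printing Implicit Defensive.
Import Order.TTheory GRing.Theory Num.Theory.
Local Open Scope classical_set_scope.
Local Open Scope ring_scope.

Section Defs.
Variable R : realType.

Definition vnorm (r : nat) (u : 'cV[R]_r) : R :=
  Num.sqrt (\sum_(k < r) u k 0 ^+ 2).

Definition frob (m q : nat) (X : 'M[R]_(m, q)) : R :=
  Num.sqrt (\sum_(i < m) \sum_(k < q) X i k ^+ 2).

Definition norm2inf (m q : nat) (X : 'M[R]_(m, q)) : R :=
  \big[Num.max/0]_(i < m) Num.sqrt (\sum_(k < q) X i k ^+ 2).

Definition beta1 (p r : nat) (w : 'I_p -> bool) (Ahat Astar : 'M[R]_(p, r))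
  (theta : 'rV[R]_r) : R :=
  sup [set s | exists u : 'cV[R]_r, vnorm u = 1 /\
    s = \sum_(j < p) (w j)%:R *
          (\sum_(k < r) (Ahat j k - Astar j k) * theta 0 k) ^+ 2 *
          `| \sum_(k < r) Ahat j k * u k 0 |].

Definition bern (pi : R) (b : bool) : R := if b then pi else 1 - pi.

Definition gen_AP d (T : measurableType d) (p r : nat)
  (Ahat : T -> 'M[R]_(p, r)) (Phat : T -> 'M[R]_r) : set (set T) :=
  [set E | exists B : set R, measurable B /\
     ((exists j k, E = [set t | B (Ahat t j k)]) \/
      (exists k l, E = [set t | B (Phat t k l)]))].

Definition sigma_AP d (T : measurableType d) (p r : nat)
  (Ahat : T -> 'M[R]_(p, r)) (Phat : T -> 'M[R]_r) : set (set T) :=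
  smallest (sigma_algebra setT) (gen_AP Ahat Phat).

End Defs.

(* By Cauchy--Schwarz, once against theta*_i and once against the unit vector u,
   beta_{1,i} <= C1^2 C2 \sum_j omega_ij y_j, where y_j = |ahat_j - a*_j|^2 lies in
   [0, 4 C2^2] (as |a*_j| = |v_j| <= C2) and \sum_j y_j = |Ahat - A*|_F^2.
   The y_j are functions of (Ahat, Phat), hence independent of the omega_ij, and a
   Chernoff bound for weighted Bernoulli sums shows that \sum_j omega_ij y_j exceeds
   (sqrt (pi_max \sum_j y_j) + sqrt (4 C2^2 ln n))^2 -- the bracket of the
   statement -- with probability at most n^-2.  A union bound over N2 concludes. *)

From HB Require Import structures.
From mathcomp Require Import all_boot all_order all_algebra.
From mathcomp Require Import all_classical all_reals all_analysis.
From mathcomp Require Import ring lra measurable_realfun.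
Set Implicit Arguments. Unset Strict Implicit. Unset Printing Implicit Defensive.
Import Order.TTheory GRing.Theory Num.Theory.
Local Open Scope classical_set_scope.
Local Open Scope ring_scope.

Section RealInequalities.
Variable R : realType.

Lemma mul2B_expR_le (y : R) : 0 <= y -> (2 - y) * expR y <= 2 + y.
Proof.
move=> y0; have [->|yn0] := eqVneq y 0; first by rewrite expR0; lra.
have yp : 0 < y by rewrite lt_neqAle eq_sym yn0.
pose f : R -> R := (fun x => 2 + x) - (fun x => 2 - x) * expR.
have df (x : R) : is_derive x 1 f (1 - (1 - x) * expR x).
  by apply: is_derive_eq; rewrite /GRing.scale /=; ring.
have cf : continuous (f : R^o -> R^o).
  by move=> x; apply/differentiable_continuous/derivable1_diffP; case: (df x).
have [c] := MVT yp (fun x _ => df x) (continuous_subspaceT cf).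
rewrite in_itv /= => /andP[c0 cy].
rewrite /f !fctE /= expR0 => fyE.
have df_ge0 : 0 <= 1 - (1 - c) * expR c.
  have := ler_wpM2r (expR_ge0 c) (expR_ge1Dx (- c)).
  by rewrite expRN mulVf ?gt_eqF ?expR_gt0 //; lra.
have : 0 <= (1 - (1 - c) * expR c) * (y - 0) by apply: mulr_ge0 => //; lra.
by rewrite -fyE; lra.
Qed.

Lemma expR_mul_le_chord (t a : R) : 0 <= t -> t <= 1 ->
  expR (t * a) <= 1 - t + t * expR a.
Proof.
move=> t0 t1; have := @convex_expR R (Itv01 t0 t1) a 0.
by rewrite !convRE /= expR0 /unstable.onem mulr0 addr0 mulr1 addrC.
Qed.

(* The exponent is [2 ln ((s + l) / s)]; [mul2B_expR_le] is the estimate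
   [ln w >= 2 (w - 1) / (w + 1)] needed to compare it with [2 l^2]. *)
Lemma exists_expR_exponent (s l : R) : 0 <= s -> 0 <= l ->
  exists2 la : R, 0 <= la & - la * (s + l) ^+ 2 + s ^+ 2 * (expR la - 1) <= - 2 * l ^+ 2.
Proof.
move=> s0 l0; have [->|sn0] := eqVneq s 0.
  by exists 2 => //; rewrite expr0n /= mul0r addr0 add0r; lra.
have sp : 0 < s by rewrite lt_neqAle eq_sym sn0.
pose w := (s + l) / s.
have w1 : 1 <= w by rewrite /w ler_pdivlMr // mul1r; lra.
have ws : w * s = s + l by rewrite /w mulfVK ?gt_eqF.
have ey : expR (ln w) = w by rewrite lnK // posrE; lra.
have y0 : 0 <= ln w by exact: ln_ge0.
exists (2 * ln w); first lra.
have -> : expR (2 * ln w) = w ^+ 2 by rewrite -ey -expRM_natl lnK // posrE; lra.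
have lnw : 2 * l <= ln w * (2 * s + l).
  have := ler_wpM2r (ltW sp) (mul2B_expR_le y0); rewrite ey -mulrA ws; nra.
have -> : s ^+ 2 * (w ^+ 2 - 1) = (s + l) ^+ 2 - s ^+ 2.
  by rewrite mulrBr mulr1 -exprMn mulrC ws.
nra.
Qed.

Lemma ln_natr_ge0 (n : nat) : 0 <= ln n%:R :> R.
Proof.
have [->|n_gt0] := posnP n; first by rewrite ln0.
by apply: ln_ge0; rewrite ler1n.
Qed.

End RealInequalities.

Section BernoulliSums.
Variable R : realType.
Implicit Types (q : R) (b : bool).

Lemma bern_ge0 q b : 0 <= q <= 1 -> 0 <= bern q b.
Proof. by case: b => /andP[q0 q1]; rewrite /bern; lra. Qed.

Lemma sum_bern q : \sum_b bern q b = 1.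
Proof. by rewrite big_bool /bern /=; ring. Qed.

Lemma sum_prod_bern (J : finType) (q : J -> R) :
  \sum_(c : {ffun J -> bool}) \prod_j bern (q j) (c j) = 1.
Proof.
rewrite -(bigA_distr_bigA (fun j b => bern (q j) b)) /=.
by apply: big1 => j _; exact: sum_bern.
Qed.

Lemma marginal_prod_bern (I J : finType) (q : I -> J -> R) (i0 : I)
    (f : {ffun J -> bool} -> R) :
  \sum_(b : {ffun I -> {ffun J -> bool}}) (\prod_i \prod_j bern (q i j) (b i j)) * f (b i0)
  = \sum_(c : {ffun J -> bool}) (\prod_j bern (q i0 j) (c j)) * f c.
Proof.
pose F i (c : {ffun J -> bool}) := (\prod_j bern (q i j) (c j)) * (if i == i0 then f c else 1).
transitivity (\sum_(b : {ffun I -> {ffun J -> bool}}) \prod_i F i (b i)).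
  apply: eq_bigr => b _; rewrite (bigD1 i0) //= [RHS](bigD1 i0) //= /F eqxx.
  rewrite mulrAC; congr (_ * _); apply: eq_bigr => i /negPf ->.
  by rewrite mulr1.
rewrite -(bigA_distr_bigA F) (bigD1 i0) //= [X in _ * X]big1 ?mulr1.
  by apply: eq_bigr => c _; rewrite /F eqxx.
move=> i /negPf ne_i; rewrite -[RHS](sum_prod_bern (q i)).
by apply: eq_bigr => c _; rewrite /F ne_i mulr1.
Qed.

Lemma sum_prod_bern_expR (J : finType) (q y : J -> R) (la : R) :
  \sum_(c : {ffun J -> bool}) (\prod_j bern (q j) (c j)) * expR (la * \sum_j (c j)%:R * y j)
  = \prod_j (1 - q j + q j * expR (la * y j)).
Proof.
have factorE j : 1 - q j + q j * expR (la * y j)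
    = \sum_b bern (q j) b * expR (la * (b%:R * y j)).
  by rewrite big_bool /bern /= mul0r mulr0 expR0 mul1r; ring.
rewrite (eq_bigr _ (fun j _ => factorE j)) bigA_distr_bigA /=.
by apply: eq_bigr => c _; rewrite big_split /= mulr_sumr expR_sum.
Qed.

End BernoulliSums.

Section BernoulliTail.
Variable R : realType.

Lemma bern_mgf_factor_le (q y B la : R) : 0 <= q <= 1 -> 0 <= y <= B -> 0 < B ->
  1 - q + q * expR (la * y) <= expR (q * (y / B) * (expR (la * B) - 1)).
Proof.
move=> /andP[q0 q1] /andP[y0 yB] Bp.
have t0 : 0 <= y / B by rewrite divr_ge0 // ltW.
have t1 : y / B <= 1 by rewrite ler_pdivrMr // mul1r.
have := expR_mul_le_chord (la * B) t0 t1.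
rewrite (_ : y / B * (la * B) = la * y); last by field; rewrite gt_eqF.
move=> chord.
apply: le_trans (expR_ge1Dx _); have := ler_wpM2l q0 chord; lra.
Qed.

Lemma markov_sum_expR (I : finType) (w g : I -> R) (t la : R) :
  (forall i, 0 <= w i) -> 0 <= la ->
  \sum_i w i * (t < g i)%R%:R <= expR (- (la * t)) * \sum_i w i * expR (la * g i).
Proof.
move=> w0 la0; rewrite mulr_sumr; apply: ler_sum => i _.
rewrite mulrCA ler_wpM2l // -expRD.
have [tS|_] := ltrP t (g i); last exact: expR_ge0.
apply: le_trans (expR_ge1Dx _); rewrite lerDl addrC -mulrBr.
by rewrite mulr_ge0 // subr_ge0 ltW.
Qed.

Lemma chernoff_bern_sum (J : finType) (q y : J -> R) (pm B t la : R) :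
  (forall j, 0 <= q j <= 1) -> (forall j, q j <= pm) -> (forall j, 0 <= y j <= B) ->
  0 < B -> 0 <= la ->
  \sum_(c : {ffun J -> bool}) (\prod_j bern (q j) (c j)) * (t < \sum_j (c j)%:R * y j)%R%:R
  <= expR (- (la * t) + pm * (\sum_j y j) / B * (expR (la * B) - 1)).
Proof.
move=> q01 qpm y0B Bp la0.
have w0 (c : {ffun J -> bool}) : 0 <= \prod_j bern (q j) (c j).
  by apply: prodr_ge0 => j _; exact: bern_ge0.
apply: le_trans (markov_sum_expR _ _ w0 la0) _.
rewrite sum_prod_bern_expR expRD ler_wpM2l ?expR_ge0 //.
have factor_le j : 0 <= 1 - q j + q j * expR (la * y j)
    <= expR (q j * (y j / B) * (expR (la * B) - 1)).
  rewrite bern_mgf_factor_le // andbT.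
  by have := expR_ge0 (la * y j); case/andP: (q01 j) => ? ?; nra.
apply: le_trans (ler_prod _ (fun j _ => factor_le j)) _.
rewrite -expR_sum ler_expR -mulr_suml.
have e0 : 0 <= expR (la * B) - 1.
  by rewrite subr_ge0 -expR0 ler_expR mulr_ge0 // ltW.
rewrite ler_wpM2r // mulr_sumr mulr_suml; apply: ler_sum => j _.
case/andP: (y0B j) => yj0 _.
rewrite mulrA; apply: ler_wpM2r; first by rewrite invr_ge0 ltW.
exact: ler_wpM2r.
Qed.

Definition tail_threshold (pm B L Y : R) : R :=
  (Num.sqrt (pm * Y) + Num.sqrt (B * L)) ^+ 2.

Lemma bern_tail_le (J : finType) (q y : J -> R) (pm B L : R) :
  (forall j, 0 <= q j <= 1) -> (forall j, q j <= pm) -> 0 <= pm ->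
  (forall j, 0 <= y j <= B) -> 0 <= L ->
  \sum_(c : {ffun J -> bool}) (\prod_j bern (q j) (c j))
     * (tail_threshold pm B L (\sum_j y j) < \sum_j (c j)%:R * y j)%R%:R
  <= expR (- 2 * L).
Proof.
move=> q01 qpm pm0 y0B L0; set Y := \sum_j y j.
have Y0 : 0 <= Y by apply: sumr_ge0 => j _; case/andP: (y0B j).
have [Bp|B_le0] := ltrP 0 B; last first.
  rewrite big1 ?expR_ge0 // => c _.
  have -> : \sum_j (c j)%:R * y j = 0.
    apply: big1 => j _; case/andP: (y0B j) => yj0 yjB.
    have -> : y j = 0 by apply/eqP; rewrite eq_le yj0 (le_trans yjB B_le0).
    by rewrite mulr0.
  by rewrite ltNge sqr_ge0 mulr0.
set s := Num.sqrt (pm * Y / B); set l := Num.sqrt L.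
have [la la0 expo_le] := exists_expR_exponent (sqrtr_ge0 (pm * Y / B)) (sqrtr_ge0 L).
have thrE : tail_threshold pm B L Y = B * (s + l) ^+ 2.
  rewrite /tail_threshold (_ : pm * Y = B * (pm * Y / B)); last by field; rewrite gt_eqF.
  by rewrite !(sqrtrM _ (ltW Bp)) -mulrDr exprMn sqr_sqrtr ?ltW.
have la'0 : 0 <= la / B := divr_ge0 la0 (ltW Bp).
apply: le_trans (chernoff_bern_sum _ q01 qpm y0B Bp la'0) _.
have sE : pm * Y / B = s ^+ 2 by rewrite sqr_sqrtr // divr_ge0 ?mulr_ge0 // ltW.
have lE : L = l ^+ 2 by rewrite sqr_sqrtr.
by rewrite ler_expR thrE divfK ?gt_eqF // sE lE mulrA divfK ?gt_eqF // -mulNr.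
Qed.

Lemma tail_threshold_sqr (pm C L F : R) : 0 <= pm -> 0 <= C -> 0 <= L -> 0 <= F ->
  tail_threshold pm (4 * C ^+ 2) L (F ^+ 2)
  = pm * F ^+ 2 + 4 * Num.sqrt pm * C * Num.sqrt L * F + 4 * C ^+ 2 * L.
Proof.
move=> pm0 C0 L0 F0.
have sqrtC : Num.sqrt (4 * C ^+ 2) = 2 * C.
  by rewrite (_ : 4 * C ^+ 2 = (2 * C) ^+ 2) ?sqrtr_sqr ?ger0_norm ?mulr_ge0 //; ring.
rewrite /tail_threshold (sqrtrM _ pm0) sqrtr_sqr (ger0_norm F0).
rewrite (sqrtrM _ (mulr_ge0 _ (sqr_ge0 C))) // sqrtC sqrrD !exprMn !sqr_sqrtr //.
ring.
Qed.

End BernoulliTail.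

Section RowNorms.
Variable R : realType.

Lemma sqr_sum_mul_le (I : finType) (a b : I -> R) :
  (\sum_k a k * b k) ^+ 2 <= (\sum_k a k ^+ 2) * (\sum_k b k ^+ 2).
Proof.
set A := \sum_k a k ^+ 2; set B := \sum_k b k ^+ 2; set X := \sum_k a k * b k.
have A0 : 0 <= A by apply: sumr_ge0 => k _; exact: sqr_ge0.
have [B0|B_gt0] := eqVneq B 0.
  have b0 k : b k = 0.
    apply/eqP; rewrite -sqrf_eq0; apply/eqP.
    by apply: (psumr_eq0P _ B0) => // j _; exact: sqr_ge0.
  by rewrite /X big1 ?B0 ?expr0n ?mulr0 // => k _; rewrite b0 mulr0.
have Bp : 0 < B.
  by rewrite lt_neqAle eq_sym B_gt0 sumr_ge0 // => k _; exact: sqr_ge0.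
(* [0 <= \sum_k (B a_k - X b_k)^2 = B (A B - X^2)] *)
have : 0 <= \sum_k (B * a k - X * b k) ^+ 2 by apply: sumr_ge0 => k _; exact: sqr_ge0.
have -> : \sum_k (B * a k - X * b k) ^+ 2
    = \sum_k (B ^+ 2 * a k ^+ 2 - (2 * B * X) * (a k * b k) + X ^+ 2 * b k ^+ 2).
  by apply: eq_bigr => k _; ring.
rewrite big_split sumrB /= -!mulr_sumr -/A -/B -/X.
rewrite (_ : _ + _ = B * (A * B - X ^+ 2)); last by ring.
by rewrite pmulr_rge0 // subr_ge0.
Qed.

Lemma norm_sum_mul_le (I : finType) (a b : I -> R) :
  `|\sum_k a k * b k| <= Num.sqrt (\sum_k a k ^+ 2) * Num.sqrt (\sum_k b k ^+ 2).
Proof.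
rewrite -sqrtrM; last by apply: sumr_ge0 => k _; exact: sqr_ge0.
by rewrite -sqrtr_sqr ler_sqrt ?sqr_sum_mul_le // mulr_ge0 // sumr_ge0 // => k _;
  exact: sqr_ge0.
Qed.

Lemma norm2inf_ge0 (m q : nat) (X : 'M[R]_(m, q)) : 0 <= norm2inf X.
Proof. exact: bigmax_ge_id. Qed.

Lemma sqnorm_row_le_norm2inf (m q : nat) (X : 'M[R]_(m, q)) (i : 'I_m) (C : R) :
  norm2inf X <= C -> \sum_k X i k ^+ 2 <= C ^+ 2.
Proof.
move=> XC; have S0 : 0 <= \sum_k X i k ^+ 2 by apply: sumr_ge0 => k _; exact: sqr_ge0.
rewrite -(sqr_sqrtr S0) ler_pXn2r // ?nnegrE ?sqrtr_ge0 ?(le_trans (norm2inf_ge0 X)) //.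
by apply: le_trans XC; rewrite /norm2inf; exact: le_bigmax.
Qed.

Lemma sqnorm_row_mulmx_orthogonal (m q : nat) (M : 'M[R]_(m, q)) (Q : 'M[R]_q) (j : 'I_m) :
  Q *m Q^T = 1%:M -> \sum_k (M *m Q) j k ^+ 2 = \sum_k M j k ^+ 2.
Proof.
move=> QQt; have sqE (x : 'rV[R]_q) : \sum_k x 0 k ^+ 2 = (x *m x^T) 0 0.
  by rewrite mxE; apply: eq_bigr => k _; rewrite mxE expr2.
transitivity (\sum_k (row j M *m Q) 0 k ^+ 2).
  by apply: eq_bigr => k _; rewrite -row_mul [X in _ = X ^+ 2]mxE.
rewrite sqE trmx_mul mulmxA -(mulmxA _ Q) QQt mulmx1 -sqE.
by apply: eq_bigr => k _; rewrite mxE.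
Qed.

Lemma sqnorm_row_subr_le (m q : nat) (X Z : 'M[R]_(m, q)) (i : 'I_m) :
  \sum_k (X - Z) i k ^+ 2 <= 2 * \sum_k X i k ^+ 2 + 2 * \sum_k Z i k ^+ 2.
Proof.
rewrite !mulr_sumr -big_split /=; apply: ler_sum => k _.
rewrite !mxE; have := sqr_ge0 (X i k + Z i k); nra.
Qed.

Lemma sqnorm_row_sub_mulmx_le (m q : nat) (X V : 'M[R]_(m, q)) (Q : 'M[R]_q)
    (j : 'I_m) (C : R) :
  Q *m Q^T = 1%:M -> norm2inf X <= C -> norm2inf V <= C ->
  0 <= \sum_k (X - V *m Q) j k ^+ 2 <= 4 * C ^+ 2.
Proof.
move=> QQt XC VC; rewrite sumr_ge0 => [|k _]; last exact: sqr_ge0.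
apply: le_trans (sqnorm_row_subr_le _ _ j) _.
rewrite sqnorm_row_mulmx_orthogonal //.
by have := sqnorm_row_le_norm2inf j XC; have := sqnorm_row_le_norm2inf j VC; lra.
Qed.

Lemma beta1_le (p r : nat) (w : 'I_p -> bool) (Ah As : 'M[R]_(p, r)) (th : 'rV[R]_r)
    (C1 C2 : R) :
  \sum_k th 0 k ^+ 2 <= C1 ^+ 2 -> (forall j, \sum_k Ah j k ^+ 2 <= C2 ^+ 2) -> 0 <= C2 ->
  beta1 w Ah As th <= C1 ^+ 2 * C2 * \sum_j (w j)%:R * \sum_k (Ah - As) j k ^+ 2.
Proof.
move=> thC1 AhC2 C20.
set M := C1 ^+ 2 * C2 * _; rewrite /beta1; set S := [set s | _].
have ubM : ubound S M.
  move=> _ [u [u1 ->]]; rewrite /M mulr_sumr; apply: ler_sum => j _.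
  set D := \sum_k (Ah - As) j k ^+ 2.
  have D0 : 0 <= D by apply: sumr_ge0 => k _; exact: sqr_ge0.
  have DE : \sum_k (Ah j k - As j k) ^+ 2 = D by apply: eq_bigr => k _; rewrite !mxE.
  have thetaC : (\sum_k (Ah j k - As j k) * th 0 k) ^+ 2 <= D * C1 ^+ 2.
    by apply: le_trans (sqr_sum_mul_le _ _) _; rewrite DE ler_wpM2l.
  have uC : `|\sum_k Ah j k * u k 0| <= C2.
    apply: le_trans (norm_sum_mul_le _ _) _; rewrite [X in _ * X]u1 mulr1.
    by rewrite -(ger0_norm C20) -sqrtr_sqr ler_sqrt ?sqr_ge0.
  have w0 : 0 <= (w j)%:R :> R := ler0n _ _.
  rewrite [leRHS](_ : _ = (w j)%:R * (D * C1 ^+ 2) * C2); last by ring.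
  exact: ler_pM (mulr_ge0 w0 (sqr_ge0 _)) (normr_ge0 _) (ler_wpM2l w0 thetaC) uC.
have [[s Ss]|S0] := pselect (exists s, S s); first by apply: ge_sup => //; exists s.
rewrite (_ : S = set0); last by apply/seteqP; split => // s Ss; apply: S0; exists s.
rewrite sup0 /M mulr_ge0 ?(mulr_ge0 (sqr_ge0 C1)) // sumr_ge0 // => j _.
by rewrite mulr_ge0 // sumr_ge0 // => k _; exact: sqr_ge0.
Qed.

Lemma beta1_le_norm2inf (m p r : nat) (w : 'I_p -> bool) (Ah As : 'M[R]_(p, r))
    (M : 'M[R]_(m, r)) (Q : 'M[R]_r) (i : 'I_m) (C1 C2 : R) :
  Q *m Q^T = 1%:M -> norm2inf M <= C1 -> norm2inf Ah <= C2 ->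
  beta1 w Ah As (row i (M *m Q))
  <= C1 ^+ 2 * C2 * \sum_j (w j)%:R * \sum_k (Ah - As) j k ^+ 2.
Proof.
move=> QQt MC1 AhC2; apply: beta1_le => [|j|].
- under eq_bigr do rewrite mxE.
  by rewrite sqnorm_row_mulmx_orthogonal // sqnorm_row_le_norm2inf.
- exact: sqnorm_row_le_norm2inf.
- exact: le_trans (norm2inf_ge0 Ah) AhC2.
Qed.

End RowNorms.

Section MeasurableFunctions.
Context d (T : measurableType d) (R : realType).

Lemma measurable_bool_set (f : T -> bool) : measurable_fun setT f -> measurable [set t | f t].
Proof. by move=> mf; rewrite -[X in measurable X]setTI; exact: mf. Qed.

Lemma indic_bool_set (f : T -> bool) (t : T) : \1_[set t | f t] t = (f t)%:R :> R.
Proof.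
rewrite indicE; case: (boolP (f t)) => ft; first by rewrite mem_set.
by rewrite memNset ?(negbTE ft) //; exact/negP.
Qed.

Lemma measurable_fun_eqb (f : T -> bool) (c : bool) :
  measurable_fun setT f -> measurable_fun setT (fun t => f t == c).
Proof.
move=> mf; have -> : (fun t => f t == c) = if c then f else (fun t => ~~ f t).
  by apply/funext => t; case: c; rewrite ?eqb_id ?eqbF_neg.
by case: c => //; exact: measurable_neg.
Qed.

Lemma measurable_fun_existsb (I : finType) (f : I -> T -> bool) :
  (forall i, measurable_fun setT (f i)) -> measurable_fun setT (fun t => [exists i, f i t]).
Proof.
move=> mf; have -> : (fun t => [exists i, f i t])
    = (fun t => \big[orb/false]_(i <- index_enum I) f i t).
  by apply/funext => t; rewrite big_orE.
elim: (index_enum I) => [|i s IHs].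
  by rewrite (_ : (fun t => _) = fun=> false) //; apply/funext => t; rewrite big_nil.
rewrite (_ : (fun t => _) = fun t => f i t || \big[orb/false]_(j <- s) f j t).
  exact: measurable_or.
by apply/funext => t; rewrite big_cons.
Qed.

Lemma measurable_fun_sqrt (f : T -> R) :
  measurable_fun setT f -> measurable_fun setT (fun t => Num.sqrt (f t)).
Proof.
apply: measurableT_comp; apply: continuous_measurable_fun; exact: sqrt_continuous.
Qed.

Lemma measurable_fun_tail_threshold (pm B L : R) (f : T -> R) :
  measurable_fun setT f -> measurable_fun setT (fun t => tail_threshold pm B L (f t)).
Proof.
move=> mf; apply: measurable_funX; apply: measurable_funD => //.
exact/measurable_fun_sqrt/measurable_funM.
Qed.

Definition mx_measurable (m q : nat) (X : T -> 'M[R]_(m, q)) :=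
  forall i j, measurable_fun setT (fun t => X t i j).

Lemma mx_measurableB (m q : nat) (X Z : T -> 'M[R]_(m, q)) :
  mx_measurable X -> mx_measurable Z -> mx_measurable (fun t => X t - Z t).
Proof.
move=> mX mZ i j; under eq_fun do rewrite !mxE.
exact: measurable_funB.
Qed.

Lemma mx_measurable_mulmxl (m q s : nat) (M : 'M[R]_(m, q)) (Z : T -> 'M[R]_(q, s)) :
  mx_measurable Z -> mx_measurable (fun t => M *m Z t).
Proof.
move=> mZ i j; under eq_fun do rewrite !mxE.
by apply: measurable_sum => k; exact: measurable_funM.
Qed.

Lemma measurable_fun_sqnorm_row (m q : nat) (X : T -> 'M[R]_(m, q)) (i : 'I_m) :
  mx_measurable X -> measurable_fun setT (fun t => \sum_k X t i k ^+ 2).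
Proof. by move=> mX; apply: measurable_sum => k; exact/measurable_funX/mX. Qed.

End MeasurableFunctions.

Section GeneratedSigmaAlgebra.
Context (R : realType) d (T : measurableType d) (p r : nat)
  (Ahat : T -> 'M[R]_(p, r)) (Phat : T -> 'M[R]_r).
Local Notation TAP := (g_sigma_algebraType (gen_AP Ahat Phat)).

Lemma mx_measurable_Ahat : mx_measurable (Ahat : TAP -> _).
Proof.
move=> j k _ B mB; rewrite setTI; apply: sub_gen_smallest.
by exists B; split => //; left; exists j, k.
Qed.

Lemma mx_measurable_Phat : mx_measurable (Phat : TAP -> _).
Proof.
move=> k l _ B mB; rewrite setTI; apply: sub_gen_smallest.
by exists B; split => //; right; exists k, l.
Qed.

Lemma sigma_AP_of_measurable (E : set TAP) : measurable E -> sigma_AP Ahat Phat E.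
Proof. by []. Qed.

Lemma sigma_AP_measurable (E : set T) :
  mx_measurable Ahat -> mx_measurable Phat -> sigma_AP Ahat Phat E -> measurable E.
Proof.
move=> mA mP; apply: smallest_sub; first exact: sigma_algebra_measurable.
move=> _ [B [mB [[j [k ->]]|[k [l ->]]]]].
- by have := mA j k measurableT _ mB; rewrite setTI.
- by have := mP k l measurableT _ mB; rewrite setTI.
Qed.

Lemma measurable_fun_sqnorm_row_residual (V : 'M[R]_(p, r)) (j : 'I_p) :
  measurable_fun (setT : set TAP) (fun t => \sum_k (Ahat t - V *m Phat t) j k ^+ 2).
Proof.
exact: (measurable_fun_sqnorm_row j
  (mx_measurableB mx_measurable_Ahat (mx_measurable_mulmxl V mx_measurable_Phat))).
Qed.

Lemma sigma_AP_tail_excess (n : nat) (A : {set 'I_n}) (y : T -> 'I_p -> R) (pm B L : R)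
    (b : {ffun 'I_n -> {ffun 'I_p -> bool}}) :
  (forall j, measurable_fun (setT : set TAP) (y ^~ j)) ->
  sigma_AP Ahat Phat
    [set t | [exists i in A, tail_threshold pm B L (\sum_j y t j) < \sum_j (b i j)%:R * y t j]].
Proof.
move=> my; apply: sigma_AP_of_measurable.
apply: measurable_bool_set; apply: measurable_fun_existsb => i.
apply: measurable_and => //; apply: measurable_fun_ltr.
  exact/measurable_fun_tail_threshold/measurable_sum.
by apply: measurable_sum => j; exact: measurable_funM.
Qed.

End GeneratedSigmaAlgebra.

Section IndicatorSums.
Context d (T : measurableType d) (R : realType) (P : probability T R).

Lemma integral_sum_indic (I : finType) (k : I -> R) (A : I -> set T) :
  (forall i, 0 <= k i) -> (forall i, measurable (A i)) ->
  (\int[P]_t (\sum_i k i * \1_(A i) t)%:E = \sum_i (k i)%:E * P (A i))%E.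
Proof.
move=> k0 mA; under eq_integral do rewrite -sumEFin.
rewrite ge0_integral_sum //; last 2 first.
- move=> i; apply/measurable_EFinP/measurable_funM => //; exact: measurable_indic.
- by move=> i t _; rewrite lee_fin mulr_ge0.
apply: eq_bigr => i _; under eq_integral do rewrite EFinM.
rewrite ge0_integralZl_EFin //; last exact/measurable_EFinP/measurable_indic.
by rewrite integral_indic ?setIT.
Qed.

Lemma measure_le_sum_indic (I : finType) (B : set T) (A : I -> set T) :
  measurable B -> (forall i, measurable (A i)) ->
  (forall t, \1_B t <= \sum_i \1_(A i) t :> R) -> (P B <= \sum_i P (A i))%E.
Proof.
move=> mB mA cover.
have -> : (\sum_i P (A i) = \int[P]_t (\sum_i 1 * \1_(A i) t)%:E)%E.
  by rewrite integral_sum_indic //; apply: eq_bigr => i _; rewrite mul1e.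
rewrite -(setIT B) -integral_indic //; apply: ge0_le_integral => //.
- by apply/measurable_EFinP; exact: measurable_indic.
- apply/measurable_EFinP; apply: measurable_sum => i.
  by apply: measurable_funM => //; exact: measurable_indic.
by move=> t _; rewrite lee_fin (eq_bigr _ (fun i _ => mul1r _)); exact: cover.
Qed.

Lemma sum_measure_le_of_indic (I : finType) (k : I -> R) (A : I -> set T) (c : R) :
  (forall i, 0 <= k i) -> (forall i, measurable (A i)) ->
  (forall t, \sum_i k i * \1_(A i) t <= c) -> (\sum_i (k i)%:E * P (A i) <= c%:E)%E.
Proof.
move=> k0 mA le_c; rewrite -integral_sum_indic //.
apply: (@le_trans _ _ (\int[P]_t (cst c%:E t))%E); last first.
  by rewrite integral_cst // -[X in (_ * X)%E]/(P setT) probability_setT mule1.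
apply: ge0_le_integral => //.
- by move=> t _; rewrite lee_fin sumr_ge0 // => i _; rewrite mulr_ge0.
- apply/measurable_EFinP; apply: measurable_sum => i.
  by apply: measurable_funM => //; exact: measurable_indic.
by move=> t _; rewrite lee_fin.
Qed.

End IndicatorSums.

Section ObservedConfiguration.
Context (R : realType) d (T : measurableType d) (P : probability T R) (n p r : nat)
  (pi : 'I_n -> 'I_p -> R) (omega : 'I_n -> 'I_p -> T -> bool) (N2 : {set 'I_n})
  (Ahat : T -> 'M[R]_(p, r)) (Phat : T -> 'M[R]_r).
Hypothesis pi01 : forall i j, 0 <= pi i j <= 1.
Hypothesis measurable_omega : forall i j (b : bool), measurable [set t | omega i j t = b].
Hypothesis indep_omega : forall (E : set T) (b : 'I_n -> 'I_p -> bool),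
  sigma_AP Ahat Phat E ->
  P (E `&` [set t | forall i j, i \in N2 -> omega i j t = b i j]) =
  (P E * (\prod_(i in N2) \prod_(j < p) bern (pi i j) (b i j))%:E)%E.
Hypotheses (mAhat : mx_measurable Ahat) (mPhat : mx_measurable Phat).
Local Notation cfg := {ffun 'I_n -> {ffun 'I_p -> bool}}.

Definition observed (t : T) : cfg := [ffun i => [ffun j => (i \in N2) && omega i j t]].

(* Off [N2] the observed configuration is constantly [false], i.e. Bernoulli with
   parameter [0]. *)
Definition observed_weight (b : cfg) : R :=
  \prod_i \prod_j bern (if i \in N2 then pi i j else 0) (b i j).

Lemma observed_weight_ge0 b : 0 <= observed_weight b.
Proof.
apply: prodr_ge0 => i _; apply: prodr_ge0 => j _; apply: bern_ge0.
by case: (i \in N2); rewrite ?pi01 ?lexx ?ler01.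
Qed.

Lemma measurable_observed_eq (b : cfg) : measurable [set t | observed t = b].
Proof.
have -> : [set t | observed t = b]
    = ~` [set t | [exists i, [exists j, observed t i j != b i j]]].
  apply/seteqP; split => t /=.
    by move=> <- /existsP[i /existsP[j]]; rewrite eqxx.
  move=> eq_b; apply/ffunP => i; apply/ffunP => j; apply/eqP/negP => ne_b.
  by apply: eq_b; apply/existsP; exists i; apply/existsP; exists j; exact/negP.
apply/measurableC/measurable_bool_set.
apply: measurable_fun_existsb => i; apply: measurable_fun_existsb => j.
rewrite (_ : (fun t => _) = fun t => ~~ (((i \in N2) && omega i j t) == b i j)); last first.
  by apply/funext => t; rewrite !ffunE.
apply/measurable_neg/measurable_fun_eqb/measurable_and => //.
by apply: (measurable_fun_bool true); rewrite setTI; exact: measurable_omega.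
Qed.

Lemma prob_observed_setI (E : set T) (b : cfg) : sigma_AP Ahat Phat E ->
  P ([set t | observed t = b] `&` E) = ((observed_weight b)%:E * P E)%E.
Proof.
move=> sE; have [vanish|] := boolP [forall i, (i \notin N2) ==> (b i == [ffun=> false])].
  have -> : [set t | observed t = b] = [set t | forall i j, i \in N2 -> omega i j t = b i j].
    apply/seteqP; split => t /=; first by move=> <- i j iN2; rewrite !ffunE iN2.
    move=> eq_b; apply/ffunP => i; apply/ffunP => j; rewrite !ffunE.
    have [iN2|niN2] := boolP (i \in N2); first by rewrite eq_b.
    by move/forallP: vanish => /(_ i); rewrite niN2 => /eqP ->; rewrite ffunE.
  suff -> : observed_weight b = \prod_(i in N2) \prod_j bern (pi i j) (b i j).
    by rewrite setIC indep_omega // muleC.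
  rewrite /observed_weight (bigID (mem N2)) /= [X in _ * X]big1 ?mulr1.
    by apply: eq_bigr => i iN2; apply: eq_bigr => j _; rewrite iN2.
  move=> i niN2; apply: big1 => j _; rewrite (negbTE niN2) /bern.
  by move/forallP: vanish => /(_ i); rewrite niN2 => /eqP ->; rewrite ffunE /= subr0.
rewrite negb_forall => /existsP[i]; rewrite negb_imply => /andP[niN2 /eqP bi_nz].
have [j bij] : exists j, b i j.
  apply/existsP; apply: contra_notT bi_nz; rewrite negb_exists => /forallP bi0.
  by apply/ffunP => j; rewrite ffunE; exact: negbTE (bi0 j).
have -> : [set t | observed t = b] = set0.
  by apply/seteqP; split => // t /= obs_b; move: bij; rewrite -obs_b !ffunE (negbTE niN2).
have -> : observed_weight b = 0.
  by rewrite /observed_weight (bigD1 i) //= (bigD1 j) //= (negbTE niN2) bij /bern !mul0r.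
by rewrite set0I measure0 mul0e.
Qed.

Lemma observed_eventE (G : cfg -> set T) :
  [set t | G (observed t) t] = \bigcup_(b in setT) ([set t | observed t = b] `&` G b).
Proof.
apply/seteqP; split => t /=; first by move=> Gt; exists (observed t).
by move=> [b _ [<-]].
Qed.

Lemma measurable_observed_event (G : cfg -> set T) :
  (forall b, sigma_AP Ahat Phat (G b)) -> measurable [set t | G (observed t) t].
Proof.
move=> sG; rewrite observed_eventE; apply: fin_bigcup_measurable => [|b _].
  exact: finite_finset.
by apply: measurableI; [exact: measurable_observed_eq | exact: sigma_AP_measurable].
Qed.

(* On the event [observed = b] the event [G b] only depends on [(Ahat, Phat)], so
   independence turns the probability into the [b]-average of [P (G b)]. *)
Lemma prob_observed_event_le (G : cfg -> set T) (c : R) :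
  (forall b, sigma_AP Ahat Phat (G b)) ->
  (forall t, \sum_b observed_weight b * \1_(G b) t <= c) ->
  (P [set t | G (observed t) t] <= c%:E)%E.
Proof.
move=> sG le_c; have mG b := sigma_AP_measurable mAhat mPhat (sG b).
have mOG b : measurable ([set t | observed t = b] `&` G b).
  exact: measurableI (measurable_observed_eq b) (mG b).
apply: (@le_trans _ _ (\sum_b P ([set t | observed t = b] `&` G b))).
  apply: measure_le_sum_indic mOG _; first exact: measurable_observed_event.
  move=> t; rewrite (bigD1 (observed t)) //=.
  have rest0 : 0 <= \sum_(b | b != observed t) \1_([set t | observed t = b] `&` G b) t :> R.
    by rewrite sumr_ge0 // => b _; rewrite indicE.
  rewrite [X in X <= _]indicE; case: (boolP (t \in _)) => [/set_mem Gt|_].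
    by rewrite indicE mem_set //= lerDl.
  by rewrite addr_ge0 // indicE.
rewrite (eq_bigr _ (fun b _ => prob_observed_setI b (sG b))).
exact: sum_measure_le_of_indic observed_weight_ge0 mG le_c.
Qed.

End ObservedConfiguration.

Section UnionBound.
Variable R : realType.

Lemma union_bound_prod_bern (I J : finType) (q : I -> J -> R) (A : {pred I})
    (bad : I -> {ffun J -> bool} -> bool) :
  (forall i j, 0 <= q i j <= 1) ->
  \sum_(b : {ffun I -> {ffun J -> bool}})
     (\prod_i \prod_j bern (q i j) (b i j)) * [exists i in A, bad i (b i)]%:R
  <= \sum_(i in A) \sum_(c : {ffun J -> bool}) (\prod_j bern (q i j) (c j)) * (bad i c)%:R.
Proof.
move=> q01; have w0 (b : {ffun I -> {ffun J -> bool}}) : 0 <= \prod_i \prod_j bern (q i j) (b i j).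
  by apply: prodr_ge0 => i _; apply: prodr_ge0 => j _; exact: bern_ge0.
have exists_le b : [exists i in A, bad i (b i)]%:R <= \sum_(i in A) (bad i (b i))%:R :> R.
  case: existsP => [[i /andP[iA bad_i]]|_]; last by rewrite sumr_ge0.
  by rewrite (bigD1 i) //= bad_i lerDl sumr_ge0.
apply: le_trans (ler_sum _ (fun b _ => ler_wpM2l (w0 b) (exists_le b))) _.
under eq_bigr do rewrite mulr_sumr.
rewrite exchange_big /=; apply: ler_sum => i _.
by rewrite (marginal_prod_bern q i (fun c => (bad i c)%:R)).
Qed.

Lemma card_mul_expR_ln_le (m n : nat) : (m <= n)%N ->
  m%:R * expR (- 2 * ln n%:R) <= n%:R^-1 :> R.
Proof.
move=> le_mn; have [n0|n_gt0] := posnP n.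
  by move: le_mn; rewrite n0 leqn0 => /eqP ->; rewrite mul0r invr0.
have np : 0 < n%:R :> R by rewrite ltr0n.
rewrite mulNr expRN expRM_natl lnK ?posrE //.
apply: le_trans (_ : n%:R * (n%:R ^+ 2)^-1 <= _).
  by rewrite ler_wpM2r ?invr_ge0 ?exprn_ge0 ?ler0n // ler_nat.
by rewrite expr2 invfM mulrA divff ?gt_eqF // mul1r.
Qed.

Lemma sum_observed_weight_excess_le (n p : nat) (pi : 'I_n -> 'I_p -> R) (N2 : {set 'I_n})
    (y : 'I_p -> R) (pm B L : R) :
  (forall i j, 0 <= pi i j <= 1) -> (forall i j, pi i j <= pm) -> 0 <= pm ->
  (forall j, 0 <= y j <= B) -> 0 <= L ->
  \sum_b observed_weight pi N2 b
     * [exists i in N2, tail_threshold pm B L (\sum_j y j) < \sum_j (b i j)%:R * y j]%R%:R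
  <= #|N2|%:R * expR (- 2 * L).
Proof.
move=> pi01 pi_le pm0 y0B L0.
apply: le_trans (union_bound_prod_bern N2
  (fun _ c => tail_threshold pm B L (\sum_j y j) < \sum_j (c j)%:R * y j) _) _.
  by move=> i j; case: (i \in N2); rewrite ?pi01 ?lexx ?ler01.
rewrite mulr_natl -sumr_const; apply: ler_sum => i iN2.
under eq_bigr do under eq_bigr do rewrite iN2.
exact: bern_tail_le.
Qed.

End UnionBound.


Theorem mainTheorem14
  (R : realType) (d : measure_display) (T : measurableType d)
  (P : probability T R)
  (n p r : nat)
  (* deterministic M* of rank r with compact SVD U D V^T *)
  (Mstar : 'M[R]_(n, p)) (U : 'M[R]_(n, r)) (D : 'M[R]_r) (V : 'M[R]_(p, r))
  (hUo : U^T *m U = 1%:M) (hVo : V^T *m V = 1%:M)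
  (hDdiag : forall k l : 'I_r, k != l -> D k l = 0)
  (hDpos : forall k : 'I_r, 0 < D k k)
  (hDord : forall k l : 'I_r, (k <= l)%N -> D l l <= D k k)
  (hM : Mstar = U *m D *m V^T)
  (hrank : \rank Mstar = r)
  (* observation indicators omega_ij ~ Bernoulli(pi_ij), independent *)
  (pi : 'I_n -> 'I_p -> R)
  (hpi : forall i j, 0 <= pi i j <= 1)
  (omega : 'I_n -> 'I_p -> T -> bool)
  (homega_meas : forall i j (b : bool), measurable [set t | omega i j t = b])
  (homega_ind : forall b : 'I_n -> 'I_p -> bool,
     P [set t | forall i j, omega i j t = b i j] =
     (\prod_(i < n) \prod_(j < p) bern (pi i j) (b i j))%:E)
  (N2 : {set 'I_n})
  (* random Ahat and orthogonal Phat *)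
  (Ahat : T -> 'M[R]_(p, r)) (Phat : T -> 'M[R]_r)
  (hAmeas : forall j k, measurable_fun setT (fun t => Ahat t j k))
  (hPmeas : forall k l, measurable_fun setT (fun t => Phat t k l))
  (hPorth : forall t, Phat t *m (Phat t)^T = 1%:M)
  (* (Ahat, Phat) independent of {omega_ij : i in N2, j in [p]} *)
  (hind : forall (E : set T) (b : 'I_n -> 'I_p -> bool),
     sigma_AP Ahat Phat E ->
     P (E `&` [set t | forall i j, i \in N2 -> omega i j t = b i j]) =
     (P E * (\prod_(i in N2) \prod_(j < p) bern (pi i j) (b i j))%:E)%E)
  (C1 C2 : R)
  (hC1 : norm2inf (U *m D) <= C1)
  (hC2A : forall t, norm2inf (Ahat t) <= C2)
  (hC2V : norm2inf V <= C2) :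
  let pimax := \big[Num.max/0]_(i < n) \big[Num.max/0]_(j < p) pi i j in
  let Astar := fun t => V *m Phat t in
  let Theta := fun t => U *m D *m Phat t in
  exists E : set T, measurable E /\
    ((1 - n%:R^-1)%:E <= P E)%E /\
    (forall t, E t ->
       \big[Num.max/0]_(i in N2)
          beta1 (fun j => omega i j t) (Ahat t) (Astar t) (row i (Theta t))
       <= C1 ^+ 2 * C2 *
          (pimax * frob (Ahat t - Astar t) ^+ 2
           + 4 * Num.sqrt pimax * C2 * Num.sqrt (ln n%:R) * frob (Ahat t - Astar t)
           + 4 * C2 ^+ 2 * ln n%:R)).
Proof.
move=> pimax Astar Theta; set L := ln n%:R; set B := 4 * C2 ^+ 2.
have C20 : 0 <= C2 := le_trans (norm2inf_ge0 V) hC2V.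
have pi_le i j : pi i j <= pimax by apply: le_trans (le_bigmax _ _ i); exact: le_bigmax.
have pm0 : 0 <= pimax := bigmax_ge_id _ _ _ _.
pose Y t j := \sum_k (Ahat t - V *m Phat t) j k ^+ 2.
have Y_bound t j : 0 <= Y t j <= B := sqnorm_row_sub_mulmx_le j (hPorth t) (hC2A t) hC2V.
pose G (b : {ffun 'I_n -> {ffun 'I_p -> bool}}) :=
  [set t | [exists i in N2, tail_threshold pimax B L (\sum_j Y t j) < \sum_j (b i j)%:R * Y t j]].
have sigma_G b : sigma_AP Ahat Phat (G b).
  by apply: sigma_AP_tail_excess => j; exact: (measurable_fun_sqnorm_row_residual V j).
pose bad := [set t | G (observed omega N2 t) t].
have P_bad : (P bad <= (#|N2|%:R * expR (- 2 * L))%:E)%E.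
  apply: (prob_observed_event_le hpi homega_meas hind hAmeas hPmeas sigma_G) => t.
  under eq_bigr do rewrite indic_bool_set.
  exact: sum_observed_weight_excess_le (ln_natr_ge0 _ _).
exists (~` bad); split; first exact/measurableC/measurable_observed_event.
split.
  rewrite probability_setC ?EFinB; last exact: measurable_observed_event.
  apply: leeB => //; apply: le_trans P_bad _; rewrite lee_fin card_mul_expR_ln_le //.
  by rewrite -[n in (_ <= n)%N]card_ord max_card.
move=> t /= good; have frob0 := sqrtr_ge0 (\sum_j Y t j).
rewrite -(tail_threshold_sqr pm0 C20 (ln_natr_ge0 _ _) frob0) sqr_sqrtr; last first.
  by rewrite sumr_ge0 // => j _; case/andP: (Y_bound t j).
have K0 : 0 <= C1 ^+ 2 * C2 by rewrite mulr_ge0 ?sqr_ge0.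
apply: bigmax_le => [|i iN2]; first by rewrite mulr_ge0 // sqr_ge0.
apply: le_trans (beta1_le_norm2inf _ _ i (hPorth t) hC1 (hC2A t)) _.
rewrite ler_wpM2l // leNgt; apply/negP => excess.
apply: good; apply/existsP; exists i; rewrite iN2 /=.
by under [X in _ < X]eq_bigr do rewrite !ffunE iN2.
Qed.
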